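(* Let $D$ be a Gauss diagram of an oriented virtual knot, and let $T$ be a triple of chords of $D$. Then $T$ is 3-movable if and only if $T$ is matched and all three chords of $T$ have the same 3-sign.
   Context: Gauss diagram: given an oriented virtual knot diagram, traverse the knot and record the classical crossings in order (each crossing is met twice). Place these points counterclockwise around a circle, and for each classical crossing draw a directed chord (arrow) from the point corresponding to passing over the crossing to the point corresponding to passing under it; each chord is labeled with the sign ($\pm1$) of the crossing. Virtual crossings do not appear. Triples and arcs: a triple of chords $T$ under consideration has its six endpoints lying on three arcs of the circle, each arc containing exactly two endpoints of chords of $T$ and no other chord endpoints of $D$; the three arcs are met in a cyclic (counterclockwise) order around the circle. 3-movable: $T$ is 3-movable if its three chords (equivalently, the corresponding three classical crossings of a virtual knot diagram with Gauss diagram $D$) can be repositioned by a classical Reidemeister III move, i.e. they are the three crossings of a Reidemeister III configuration: three strands in a disk pairwise crossing once, one strand passing over both others and one strand passing under both others, with the three arcs of the Gauss diagram corresponding to the three strands. Matched: $T$ is matched if one of its three arcs contains the two arrowheads of two chords of $T$, another arc contains the two arrowtails of two chords of $T$, and the third arc contains one head and one tail belonging to two distinct chords of $T$. 3-sign: for each chord $c$ of a matched triple define three numbers: its sign ($\pm1$, the sign of the crossing); its parity, $+1$ if $c$ intersects an even number of the other chords of $T$ and $-1$ if an odd number; its direction, $+1$ if $c$ points counterclockwise around the three arcs (from an arc to the next arc in the counterclockwise cyclic order of the three arcs) and $-1$ if it points clockwise. The 3-sign of $c$ is the product of its sign, parity and direction. *)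

From mathcomp Require Import all_boot all_order all_algebra.
Set Implicit Arguments. Unset Strict Implicit. Unset Printing Implicit Defensive.
Import Order.TTheory GRing.Theory Num.Theory.
Local Open Scope ring_scope.

(* A Gauss diagram with n chords: the 2n chord endpoints are the positions
   0, 1, ..., 2n-1 placed counterclockwise on the circle (in the order met
   when traversing the knot).  Chord c goes from its tail [tl c] (passing
   over) to its head [hd c] (passing under); [sg c] is its sign (+1 or -1). *)
Definition is_gauss (n : nat) (tl hd : 'I_n -> 'I_(n.*2)) (sg : 'I_n -> int)
  : Prop :=
  [/\ injective tl, injective hd, (forall i j, tl i != hd j)
    & (forall i, sg i = 1 \/ sg i = -1)].

Definition det2 (x y : rat * rat) : rat := x.1 * y.2 - x.2 * y.1.

Definition sgn (x : rat) : int := if 0 < x then 1 else -1.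

Definition cyc (a b c : nat) : bool :=
  [|| (a < b < c)%N, (b < c < a)%N | (c < a < b)%N].

Section Triple.
Variables (n : nat) (tl hd : 'I_n -> 'I_(n.*2)) (sg : 'I_n -> int).
(* The triple T = {t 0, t 1, t 2}; its three arcs are k = 0,1,2, arc k
   consisting of the two consecutive positions q k and q k + 1 (mod 2n). *)
Variables (t : 'I_3 -> 'I_n) (q : 'I_3 -> 'I_(n.*2)).

Definition succp (p : 'I_(n.*2)) : nat := (p.+1 %% n.*2)%N.
Definition arc_fst (k : 'I_3) : nat := q k.
Definition arc_snd (k : 'I_3) : nat := succp (q k).
Definition in_arc (k : 'I_3) (p : nat) : bool :=
  (p == arc_fst k) || (p == arc_snd k).

Definition owns (i : 'I_3) (p : nat) : bool :=
  (p == val (tl (t i))) || (p == val (hd (t i))).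
Definition is_Tend (p : nat) : bool := [exists i, owns i p].
Definition is_head (p : nat) : bool := [exists i, p == val (hd (t i))].
Definition is_tail (p : nat) : bool := [exists i, p == val (tl (t i))].

Definition arc_positions : seq nat :=
  flatten [seq [:: arc_fst k; arc_snd k] | k <- enum 'I_3].

(* T is a triple of (distinct) chords whose six endpoints lie on the three
   arcs, each arc containing exactly two endpoints of T and no other
   endpoint of D (so the two endpoints of an arc are consecutive). *)
Definition triple_arcs : Prop :=
  [/\ injective t, uniq arc_positions & all is_Tend arc_positions].

Definition matched : Prop :=
  exists kH kT kM : 'I_3,
    [&& kH != kT, kH != kM, kT != kM,
        is_head (arc_fst kH) && is_head (arc_snd kH),
        is_tail (arc_fst kT) && is_tail (arc_snd kT) &
                ((is_head (arc_fst kM) && is_tail (arc_snd kM))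
         || (is_tail (arc_fst kM) && is_head (arc_snd kM)))
        && ~~ [exists i, owns i (arc_fst kM) && owns i (arc_snd kM)]].

(* two chords intersect iff their endpoints interleave on the circle *)
Definition crosses (c d : 'I_n) : bool :=
  let a := minn (tl c) (hd c) in
  let b := maxn (tl c) (hd c) in
  ((a < tl d < b)%N) != ((a < hd d < b)%N).

Definition parity (i : 'I_3) : int :=
  (-1) ^+ #|[set j : 'I_3 | (j != i) && crosses (t i) (t j)]|.

Definition direction (i : 'I_3) : int :=
  if [exists kA, exists kB, exists kC,
        [&& kA != kB, kA != kC, kB != kC,
            in_arc kA (tl (t i)), in_arc kB (hd (t i)) &
            cyc (arc_fst kA) (arc_fst kB) (arc_fst kC)]]
  then 1 else -1.

Definition three_sign (i : 'I_3) : int := sg (t i) * parity i * direction i.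

(* ---- Reidemeister III configurations ----
   Three oriented strands s = 0,1,2 in a disk, realised as three oriented
   straight lines P s + a * v s in general position (pairwise crossing once,
   the three crossings distinct), with heights h s (distinct; the highest
   strand passes over both others, the lowest under both others). *)
Section RIII.
Variables (P v : 'I_3 -> rat * rat) (h : 'I_3 -> nat).

(* parameter along strand s of its crossing with strand u *)
Definition param (s u : 'I_3) : rat :=
  det2 ((P u).1 - (P s).1, (P u).2 - (P s).2) (v u) / det2 (v s) (v u).

Definition lines_general : Prop :=
  (forall s u, s != u -> det2 (v s) (v u) != 0) /\
  (forall s u w, s != u -> s != w -> u != w -> param s u != param s w).

Definition first_on (s u : 'I_3) : bool :=
  [forall w, ((w != s) && (w != u)) ==> (param s u < param s w)].

Definition cr_sign (s u : 'I_3) : int :=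
  if (h u < h s)%N then sgn (det2 (v s) (v u)) else sgn (det2 (v u) (v s)).

(* strand s corresponds to arc (sigma s); its crossings, in the order met
   along s, correspond to the two endpoints of the arc in ccw order *)
Definition pos_on (sigma : 'I_3 -> 'I_3) (s u : 'I_3) : nat :=
  if first_on s u then arc_fst (sigma s) else arc_snd (sigma s).

Definition realises (sigma : 'I_3 -> 'I_3) : Prop :=
  forall s u : 'I_3, s != u -> exists i : 'I_3,
    (if (h u < h s)%N
     then (val (tl (t i)) == pos_on sigma s u) && (val (hd (t i)) == pos_on sigma u s)
     else (val (hd (t i)) == pos_on sigma s u) && (val (tl (t i)) == pos_on sigma u s))
    /\ sg (t i) = cr_sign s u.
End RIII.

Definition three_movable : Prop :=
  exists sigma : 'I_3 -> 'I_3, injective sigma /\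
  exists (P v : 'I_3 -> rat * rat) (h : 'I_3 -> nat),
    [/\ lines_general P v, injective h & realises P v h sigma].

End Triple.

Definition ix0 : 'I_3 := @Ordinal 3 0 isT.
Definition ix1 : 'I_3 := @Ordinal 3 1 isT.
Definition ix2 : 'I_3 := @Ordinal 3 2 isT.

From mathcomp Require Import all_boot all_order all_algebra.
From mathcomp Require Import zify ring.
Set Implicit Arguments. Unset Strict Implicit. Unset Printing Implicit Defensive.
Import Order.TTheory GRing.Theory Num.Theory.

(* Both sides of the equivalence only see the six endpoints of T: which arc
   slot each of them occupies, the order of the arcs around the circle, and
   the three signs.  Reading off these data turns the right-hand side into a
   boolean function of a finite "chord pattern".

   For the left-hand side, number the strands of a Reidemeister III
   configuration from bottom to top.  Up to what the definition observes,
   three lines in general position are then described by two bits per strand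
   s: whether, along s, the crossing with strand s + 1 comes first, and the
   sign of det (v s, v (s + 1)).  Since the three crossing points form a
   closed triangle, the bits satisfy one parity relation per strand, and every
   bit pattern satisfying these relations is realised by a fixed triangle,
   possibly mirrored, with some directions reversed.  So movability too is a
   boolean function of the chord pattern, and the two functions are compared
   on all patterns by computation. *)

Variant ord3_spec : 'I_3 -> Type :=
  Ord3_0 : ord3_spec ix0 | Ord3_1 : ord3_spec ix1 | Ord3_2 : ord3_spec ix2.

Lemma ord3P s : ord3_spec s.
Proof.
case: s => [[|[|[|m]]] lt_s3] //.
- by rewrite (_ : Ordinal lt_s3 = ix0); [constructor | apply: val_inj].
- by rewrite (_ : Ordinal lt_s3 = ix1); [constructor | apply: val_inj].
- by rewrite (_ : Ordinal lt_s3 = ix2); [constructor | apply: val_inj].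
Qed.

Definition ords3 : seq 'I_3 := [:: ix0; ix1; ix2].

Lemma enum_ord3 : enum 'I_3 = ords3.
Proof. by apply: (inj_map val_inj); rewrite val_enum_ord. Qed.

Lemma mem_ords3 s : s \in ords3.
Proof. by rewrite -enum_ord3 mem_enum. Qed.

Lemma uniq_ords3 : uniq ords3.
Proof. by rewrite -enum_ord3 enum_uniq. Qed.

Lemma has_ords3 (P : pred 'I_3) : has P ords3 = [exists s, P s].
Proof. by apply/hasP/existsP => [[s _ Ps] | [s Ps]]; exists s; rewrite ?mem_ords3. Qed.

Lemma card_ords3 (P : pred 'I_3) : #|[set s | P s]| = count P ords3.
Proof. by rewrite cardsE cardE /enum_mem size_filter -enumT enum_ord3. Qed.

Lemma nth_map_ords3 (T : Type) (x0 : T) (f : 'I_3 -> T) (s : 'I_3) :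
  nth x0 (map f ords3) s = f s.
Proof. by case: (ord3P s). Qed.

Lemma ordS3_neq (s : 'I_3) : [/\ ordS s != s, ordS (ordS s) != s & ordS (ordS s) != ordS s].
Proof. by case: (ord3P s). Qed.

Lemma ordS3K (s : 'I_3) : ordS (ordS (ordS s)) = s.
Proof. by apply: val_inj; case: (ord3P s). Qed.

Lemma ord3_neqE (s u : 'I_3) : s != u -> (u == ordS s) || (s == ordS u).
Proof. by case: (ord3P s); case: (ord3P u). Qed.

Lemma ord3_third (s u w x : 'I_3) :
  s != u -> s != w -> u != w -> x != s -> x != u -> x = w.
Proof. by case: (ord3P s); case: (ord3P u); case: (ord3P w); case: (ord3P x). Qed.

Lemma ordS3E : [/\ ordS ix0 = ix1, ordS ix1 = ix2 & ordS ix2 = ix0].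
Proof. by split; apply: val_inj. Qed.

Lemma uniq_map_inj (T1 T2 : eqType) (f : T1 -> T2) (s : seq T1) :
  uniq (map f s) -> {in s &, injective f}.
Proof.
move=> Us x y xs ys fxy; rewrite -(nth_index x xs) -(nth_index x ys); congr nth; apply/eqP.
rewrite -(nth_uniq (f x) _ _ Us) ?size_map ?index_mem // !(nth_map x) ?index_mem //.
by rewrite !nth_index // fxy.
Qed.

Lemma perm_map_inj_full (T : eqType) (s : seq T) (f : T -> T) :
  uniq s -> (forall x, x \in s) -> injective f -> perm_eq (map f s) s.
Proof.
move=> Us s_full f_inj; have Ufs : uniq (map f s) by rewrite map_inj_uniq.
apply: uniq_perm => // x.
have [_ ->] := uniq_min_size Ufs (fun y _ => s_full y) (eq_leq (esym (size_map f s))).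
by rewrite s_full.
Qed.

Lemma exists3P (B : 'I_3 -> 'I_3 -> 'I_3 -> bool) :
  (exists s u w, B s u w) <->
  has (fun s => has (fun u => has (fun w => B s u w) ords3) ords3) ords3.
Proof.
split=> [[s [u [w Bsuw]]] | /hasP[s _ /hasP[u _ /hasP[w _ Bsuw]]]]; last by exists s, u, w.
by apply/hasP; exists s; rewrite ?mem_ords3 //; apply/hasP; exists u; rewrite ?mem_ords3 //;
  apply/hasP; exists w; rewrite ?mem_ords3.
Qed.

Lemma mem_bools (b : bool) : b \in [:: true; false].
Proof. by case: b. Qed.

Definition triples (T : Type) (xs : seq T) : seq (seq T) :=
  [seq [:: x; yz.1; yz.2] | x <- xs, yz <- [seq (y, z) | y <- xs, z <- xs]].

Lemma map_ords3_triples (T : eqType) (xs : seq T) (f : 'I_3 -> T) :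
  (forall s, f s \in xs) -> map f ords3 \in triples xs.
Proof. by move=> fxs; apply/allpairsP; exists (f ix0, (f ix1, f ix2)); rewrite /= allpairs_f. Qed.

Lemma cyc_congr a b c a' b' c' :
  (a < b) = (a' < b') -> (b < c) = (b' < c') -> (c < a) = (c' < a') ->
  cyc a b c = cyc a' b' c'.
Proof. by rewrite /cyc => -> -> ->. Qed.

Lemma cyc_rot N k a b c : k <= N -> a < N -> b < N -> c < N ->
  cyc ((a + k) %% N) ((b + k) %% N) ((c + k) %% N) = cyc a b c.
Proof.
move=> kN aN bN cN; have wrap x : x < N -> (x + k) %% N = if x + k < N then x + k else x + k - N.
  move=> xN; case: ifP => [/modn_small // | /negbT]; rewrite -leqNgt => Nxk.
  by rewrite -{1}(subnK Nxk) modnDr modn_small //; lia.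
by rewrite !wrap //; do 3 case: ifP => ?; rewrite /cyc; lia.
Qed.

Lemma between_cyc x y z w : uniq [:: x; y; z; w] ->
  ((minn x y < z < maxn x y) != (minn x y < w < maxn x y)) = (cyc x z y != cyc x w y).
Proof. by rewrite /= !inE /cyc; lia. Qed.

(** * Three lines in the plane *)

Local Open Scope ring_scope.

Lemma det2C (x y : rat * rat) : det2 y x = - det2 x y.
Proof. by rewrite /det2; ring. Qed.

Lemma neq_ltNlt (R : realDomainType) (x y : R) : x != y -> (x < y) = ~~ (y < x).
Proof. by case: ltgtP. Qed.

Lemma mulr_gt0E (R : realDomainType) (x y : R) :
  x != 0 -> y != 0 -> (0 < x * y) = ((0 < x) == (0 < y)).
Proof.
move=> x0 y0; case: (ltgtP 0 x) => [x_gt0 | x_lt0 | x_eq0]; last by rewrite -x_eq0 eqxx in x0.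
  by rewrite pmulr_rgt0.
by rewrite nmulr_rgt0 // (neq_ltNlt y0); case: (0 < y).
Qed.

(* A configuration of three lines is summarised by bit vectors indexed by the
   cyclically consecutive pairs (s, s + 1): [first_bits] tells whether, along
   strand s, the crossing with s + 1 comes before the one with s + 2, and
   [det_bits] gives the sign of det (v s, v (s + 1)).  [first_bit] and
   [det_bit] recover the value for an arbitrary ordered pair s != u. *)
Definition first_bits (P v : 'I_3 -> rat * rat) (s : 'I_3) : bool := first_on P v s (ordS s).
Definition det_bits (v : 'I_3 -> rat * rat) (s : 'I_3) : bool := 0 < det2 (v s) (v (ordS s)).

Definition first_bit (f : 'I_3 -> bool) (s u : 'I_3) : bool :=
  if u == ordS s then f s else ~~ f s.
Definition det_bit (d : 'I_3 -> bool) (s u : 'I_3) : bool :=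
  if u == ordS s then d s else ~~ d u.

Definition triangle_signs (f d : 'I_3 -> bool) : bool :=
  all (fun s => (f s == d (ordS (ordS s))) == (f (ordS s) == d (ordS s))) ords3.

Lemma eq_triangle_signs f f' d d' : f =1 f' -> d =1 d' ->
  triangle_signs f d = triangle_signs f' d'.
Proof. by move=> Ef Ed; apply: eq_all => s; rewrite !Ef !Ed. Qed.

Section ThreeLines.
Variables (P v : 'I_3 -> rat * rat).
Local Notation a := (param P v).
Local Notation d s u := (det2 (v s) (v u)).

Lemma first_on_third s u w :
  s != u -> s != w -> u != w -> first_on P v s u = (a s u < a s w).
Proof.
move=> su sw uw; apply/forallP/idP => [/(_ w) | lt_uw x].
  by rewrite eq_sym sw eq_sym uw.
by apply/implyP => /andP[xs xu]; rewrite (ord3_third su sw uw xs xu).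
Qed.

Lemma first_bitsE s : first_bits P v s = (a s (ordS s) < a s (ordS (ordS s))).
Proof. by case: (ordS3_neq s) => *; apply: first_on_third; rewrite // eq_sym. Qed.

(* The sides of the triangle of crossing points add up to zero; taking the
   determinant with [v w] gives this relation, the source of [triangle_signs]. *)
Lemma param_triangle s u w : d s u != 0 -> d s w != 0 -> d u w != 0 ->
  (a s w - a s u) * d w s = (a u s - a u w) * d u w.
Proof.
rewrite /param /det2.
move: (P s) (P u) (P w) (v s) (v u) (v w) => [p1 p2] [q1 q2] [r1 r2] [x1 x2] [y1 y2] [z1 z2] /=.
move=> su sw uw; have us : y1 * x2 - y2 * x1 != 0.
  by rewrite (_ : _ - _ = - (x1 * y2 - x2 * y1)) ?oppr_eq0 //; ring.
by field; apply/and4P.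
Qed.

Hypothesis general : lines_general P v.

Lemma det2_neq0 s u : s != u -> d s u != 0.
Proof. by case: general => + _; apply. Qed.

Lemma param_neq s u w : s != u -> s != w -> u != w -> a s u != a s w.
Proof. by case: general => _; apply. Qed.

Lemma first_onE s u : s != u -> first_on P v s u = first_bit (first_bits P v) s u.
Proof.
move=> su; rewrite /first_bit; case/orP: (ord3_neqE su) => [/eqP-> | /eqP Es].
  by rewrite eqxx.
move: su; rewrite Es => Su_u; case: (ordS3_neq u) => _ SSu_u SSu_Su.
have u_SSu : u != ordS (ordS u) by rewrite eq_sym.
have Su_SSu : ordS u != ordS (ordS u) by rewrite eq_sym.
rewrite (negbTE u_SSu) first_bitsE ordS3K (first_on_third Su_u Su_SSu u_SSu).
by rewrite neq_ltNlt // param_neq.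
Qed.

Lemma det2_gt0E s u : s != u -> (0 < d s u) = det_bit (det_bits v) s u.
Proof.
move=> su; rewrite /det_bit; case/orP: (ord3_neqE su) => [/eqP-> | /eqP Es].
  by rewrite eqxx.
case: (ordS3_neq u) => Su_u SSu_u _; rewrite Es eq_sym (negbTE SSu_u) /det_bits det2C.
by rewrite oppr_gt0 neq_ltNlt // det2_neq0 // eq_sym.
Qed.

Lemma triangle_signs_bits : triangle_signs (first_bits P v) (det_bits v).
Proof.
apply/allP => s _; have [Ss_s SSs_s SSs_Ss] := ordS3_neq s.
have [s_Ss s_SSs Ss_SSs] : [/\ s != ordS s, s != ordS (ordS s) & ordS s != ordS (ordS s)].
  by split; rewrite eq_sym.
have fS : first_bits P v s = (0 < a s (ordS (ordS s)) - a s (ordS s)).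
  by rewrite subr_gt0 first_bitsE.
have fSS : first_bits P v (ordS s) = (0 < a (ordS s) s - a (ordS s) (ordS (ordS s))).
  by rewrite subr_gt0 first_bitsE ordS3K.
have dSS : det_bits v (ordS (ordS s)) = (0 < d (ordS (ordS s)) s) by rewrite /det_bits ordS3K.
have X0 : a s (ordS (ordS s)) - a s (ordS s) != 0 by rewrite subr_eq0 param_neq.
have Y0 : a (ordS s) s - a (ordS s) (ordS (ordS s)) != 0 by rewrite subr_eq0 param_neq.
have := param_triangle (det2_neq0 s_Ss) (det2_neq0 s_SSs) (det2_neq0 Ss_SSs).
move/(congr1 (fun x => 0 < x)).
rewrite /= (mulr_gt0E X0) ?det2_neq0 // (mulr_gt0E Y0) ?det2_neq0 //.
by rewrite fS fSS dSS => ->.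
Qed.
End ThreeLines.

Definition negate_if (b : bool) (x : rat * rat) : rat * rat := if b then (- x.1, - x.2) else x.

Lemma det2_negate b c x y :
  det2 (negate_if b x) (negate_if c y) = (-1) ^+ (b (+) c) * det2 x y.
Proof. by case: b; case: c; rewrite /det2 /= ?expr0 ?expr1 ?mul1r ?mulN1r; ring. Qed.

Lemma ltr_signM (b : bool) (x y : rat) :
  x != y -> ((-1) ^+ b * x < (-1) ^+ b * y) = b (+) (x < y).
Proof.
by move=> xy; case: b; rewrite /= ?expr0 ?expr1 ?mul1r ?mulN1r // ltrN2 neq_ltNlt // eq_sym.
Qed.

Lemma eqr_signM (b : bool) (x y : rat) : ((-1) ^+ b * x == (-1) ^+ b * y) = (x == y).
Proof. by case: b; rewrite /= ?expr0 ?expr1 ?mul1r ?mulN1r ?eqr_opp. Qed.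

Section NegateDirections.
Variables (P v : 'I_3 -> rat * rat) (r : 'I_3 -> bool).
Let v' s := negate_if (r s) (v s).

Lemma param_negate s u : param P v' s u = (-1) ^+ r s * param P v s u.
Proof.
rewrite /param /v' -[(_, _)]/(negate_if false _) !det2_negate.
by case: (r s); case: (r u); rewrite /= ?expr0 ?expr1 ?mul1r ?mulN1r ?invrN ?mulrN ?mulNr ?opprK.
Qed.

Hypothesis general : lines_general P v.

Lemma lines_general_negate : lines_general P v'.
Proof.
split=> [s u su | s u w su sw uw].
  by rewrite /v' det2_negate mulf_eq0 signr_eq0 (det2_neq0 general).
by rewrite !param_negate eqr_signM (param_neq general).
Qed.

Lemma first_bits_negate s : first_bits P v' s = r s (+) first_bits P v s.
Proof.
have [Ss_s SSs_s SSs_Ss] := ordS3_neq s.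
by rewrite !first_bitsE !param_negate ltr_signM // (param_neq general) // eq_sym.
Qed.

Lemma det_bits_negate s : det_bits v' s = r s (+) r (ordS s) (+) det_bits v s.
Proof.
rewrite /det_bits /v' det2_negate -[X in X < _](mulr0 ((-1) ^+ (r s (+) r (ordS s)))).
by rewrite ltr_signM // eq_sym (det2_neq0 general) // eq_sym; case: (ordS3_neq s).
Qed.
End NegateDirections.

Definition base_point (m : bool) (s : 'I_3) : rat * rat :=
  nth (0, 0) [:: (0, 0); (1, 0); (0, (-1) ^+ m)] s.
Definition base_dir (m : bool) (s : 'I_3) : rat * rat :=
  nth (0, 0) [:: (1, 0); (0, (-1) ^+ m); (1, (-1) ^+ m)] s.

Lemma first_bits_base m s : first_bits (base_point m) (base_dir m) s = (s == ix2).
Proof. by rewrite first_bitsE; case: m; case: (ord3P s); vm_compute. Qed.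

Lemma det_bits_base m s : det_bits (base_dir m) s = m (+) (s == ix0).
Proof. by case: m; case: (ord3P s); vm_compute. Qed.

Lemma lines_general_base m : lines_general (base_point m) (base_dir m).
Proof.
split=> [s u | s u w].
  by case: m; case: (ord3P s); case: (ord3P u); vm_compute.
by case: m; case: (ord3P s); case: (ord3P u); case: (ord3P w); vm_compute.
Qed.

(* Reversing the directions selected by [r] toggles first bit s when [r s]
   holds and det bit s when exactly one of [r s], [r (s + 1)] holds, while
   mirroring toggles every det bit.  This moves the bits of the base triangle
   to any pattern satisfying [triangle_signs]. *)
Lemma exists_lines_with_bits f d : triangle_signs f d -> exists P v,
  [/\ lines_general P v, forall s, first_bits P v s = f s & forall s, det_bits v s = d s].
Proof.
move=> tri; pose r s := f s (+) (s == ix2); pose m := ~~ (d ix0 (+) r ix0 (+) r ix1).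
have gen := lines_general_base m.
exists (base_point m), (fun s => negate_if (r s) (base_dir m s)); split.
- exact: lines_general_negate.
- by move=> s; rewrite first_bits_negate // first_bits_base /r addbK.
move=> s; rewrite (det_bits_negate _ gen) det_bits_base /m /r.
case: ordS3E tri => S0 S1 S2; rewrite /triangle_signs /= S0 S1 S2.
case: (ord3P s); rewrite ?S0 ?S1 ?S2 /=;
  by case: (f ix0); case: (f ix1); case: (f ix2); case: (d ix0); case: (d ix1); case: (d ix2).
Qed.

Local Close Scope ring_scope.

Lemma sort_heights (h : 'I_3 -> nat) : injective h ->
  exists2 pi : 'I_3 -> 'I_3, injective pi & forall s u, (h (pi u) < h (pi s)) = (u < s).
Proof.
move=> h_inj; pose xs := sort (relpre h leq) ords3.
have xs_perm : perm_eq xs ords3 by rewrite perm_sort.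
have xs_size : size xs = 3 by rewrite (perm_size xs_perm).
have xs_uniq : uniq xs by rewrite (perm_uniq xs_perm) uniq_ords3.
have xs_sorted : sorted (relpre h leq) xs by apply: sort_sorted => x y; apply: leq_total.
pose pi (s : 'I_3) := nth ix0 xs s.
have pi_inj : injective pi by move=> s u /eqP; rewrite nth_uniq ?xs_size // => /eqP /val_inj.
have pi_mono (s u : 'I_3) : u < s -> h (pi u) <= h (pi s).
  apply: (sorted_ltn_nth (fun y x z => @leq_trans (h y) (h x) (h z)) ix0 xs_sorted);
    by rewrite inE xs_size.
exists pi => // s u; case: (ltngtP u s) => [lt_us | lt_su | /val_inj ->]; last by rewrite ltnn.
  rewrite ltn_neqAle pi_mono // andbT (inj_eq h_inj) (inj_eq pi_inj).
  by apply: contraTneq lt_us => ->; rewrite ltnn.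
by apply/negbTE; rewrite -leqNgt pi_mono.
Qed.

Section Relabel.
Variables (P v : 'I_3 -> rat * rat) (pi : 'I_3 -> 'I_3).
Hypothesis pi_inj : injective pi.

Lemma lines_general_relabel : lines_general P v -> lines_general (P \o pi) (v \o pi).
Proof.
case=> det_neq0 param_neq; split=> [s u su | s u w su sw uw].
  by apply: det_neq0; rewrite (inj_eq pi_inj).
by apply: param_neq; rewrite (inj_eq pi_inj).
Qed.

Lemma first_on_relabel s u : first_on (P \o pi) (v \o pi) s u = first_on P v (pi s) (pi u).
Proof.
have [pi' piK pi'K] := injF_bij pi_inj.
have paramE x y : param (P \o pi) (v \o pi) x y = param P v (pi x) (pi y) by [].
apply/forallP/forallP => lt_other w; last by have := lt_other (pi w); rewrite !(inj_eq pi_inj).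
have := lt_other (pi' w); rewrite !paramE.
by rewrite -[pi' w == s](inj_eq pi_inj) -[pi' w == u](inj_eq pi_inj) !pi'K.
Qed.
End Relabel.

(** * Chord patterns *)

(* Slots and endpoints are both encoded as pairs in ['I_3 * bool]: the slot
   (k, false) / (k, true) is the first / second position of arc k in
   counterclockwise order, the endpoint (i, true) / (i, false) is the tail /
   head of chord [t i].  [code] numbers both from 0 to 5. *)
Definition code (x : 'I_3 * bool) : nat := x.2 + (val x.1).*2.

Definition ends3 : seq ('I_3 * bool) := [seq (i, b) | i <- ords3, b <- [:: false; true]].

Definition sign_of (b : bool) : int := if b then 1%R else (-1)%R.

Definition over_pairs : seq ('I_3 * 'I_3) :=
  [seq su <- [seq (s, u) | s <- ords3, u <- ords3] | val su.2 < val su.1].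

(* In a configuration, strand s runs along arc [sigma s] and the strands are
   numbered from bottom to top, so that s passes over u iff u < s.  Each
   crossing is recorded as (tail slot, head slot, positive sign). *)
Definition crossings (sigma : 'I_3 -> 'I_3) (f d : 'I_3 -> bool) : seq (nat * nat * bool) :=
  [seq (code (sigma su.1, ~~ first_bit f su.1 su.2), code (sigma su.2, ~~ first_bit f su.2 su.1),
        det_bit d su.1 su.2) | su <- over_pairs].

Definition configurations : seq (seq 'I_3 * (seq bool * seq bool)) :=
  [seq c <- [seq (xs, fd) | xs <- permutations ords3,
                            fd <- [seq (fs, ds) | fs <- triples [:: true; false],
                                                  ds <- triples [:: true; false]]]
   | triangle_signs (nth false c.2.1) (nth false c.2.2)].

Definition configuration_crossings : seq (seq (nat * nat * bool)) :=
  [seq crossings (nth ix0 c.1) (nth false c.2.1) (nth false c.2.2) | c <- configurations].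

Lemma code_inj : injective code.
Proof. by move=> [i b] [j c]; case: (ord3P i); case: (ord3P j); case: b; case: c. Qed.

Lemma half_code x : (code x)./2 = x.1.
Proof. exact: half_bit_double. Qed.

Lemma mem_ends3 e : e \in ends3.
Proof. by case: e => i b; case: (ord3P i); case: b. Qed.

Lemma uniq_ends3 : uniq ends3.
Proof. by []. Qed.

Lemma nth_ends3 e : nth e ends3 (code e) = e.
Proof. by case: e => i b; case: (ord3P i); case: b. Qed.

Lemma sign_of_inj : injective sign_of.
Proof. by case; case. Qed.

Lemma over_pairsP s u : ((s, u) \in over_pairs) = (u < s).
Proof. by rewrite mem_filter allpairs_f ?mem_ords3 ?andbT. Qed.

Lemma eq_crossings sigma sigma' f f' d d' : sigma =1 sigma' -> f =1 f' -> d =1 d' ->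
  crossings sigma f d = crossings sigma' f' d'.
Proof. by move=> Es Ef Ed; apply: eq_map => su; rewrite /first_bit /det_bit !Es !Ef !Ed. Qed.

(* A chord pattern: [l] lists the slot codes of the six endpoints of T (in
   the order of their codes) and [sgs] tells which chords are positive.  Slots
   and indices are compared as numbers, which keeps [vm_compute] below fast. *)
Section Pattern.
Variables (l : seq nat) (sgs : seq bool).

Definition end_slot (e : 'I_3 * bool) : nat := nth 0 l (code e).

Definition pat_chords : seq (nat * nat * bool) :=
  [seq (end_slot (i, true), end_slot (i, false), nth false sgs i) | i <- ords3].

Definition pat_realisable : bool :=
  has (all [in pat_chords]) configuration_crossings.

Variable ccw : bool.

(* The position of a slot around the circle when the arcs come in the order
   0, 1, 2 ([ccw]) or 0, 2, 1. *)
Definition slot_rank (c : nat) : nat :=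
  odd c + (if ccw then c./2 else (3 - c./2) %% 3).*2.
Definition slot_cyc a b c : bool := cyc (slot_rank a) (slot_rank b) (slot_rank c).

Definition pat_is_head c : bool := has (fun i => c == end_slot (i, false)) ords3.
Definition pat_is_tail c : bool := has (fun i => c == end_slot (i, true)) ords3.
Definition pat_owns (i : 'I_3) c : bool := (c == end_slot (i, true)) || (c == end_slot (i, false)).

Definition pat_matched : bool :=
  has (fun kH => has (fun kT => has (fun kM =>
    [&& val kH != val kT, val kH != val kM, val kT != val kM,
        pat_is_head (code (kH, false)) && pat_is_head (code (kH, true)),
        pat_is_tail (code (kT, false)) && pat_is_tail (code (kT, true)) &
        ((pat_is_head (code (kM, false)) && pat_is_tail (code (kM, true)))
         || (pat_is_tail (code (kM, false)) && pat_is_head (code (kM, true))))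
        && ~~ has (fun i => pat_owns i (code (kM, false)) && pat_owns i (code (kM, true))) ords3])
  ords3) ords3) ords3.

Definition pat_crosses (i j : 'I_3) : bool :=
  slot_cyc (end_slot (i, true)) (end_slot (j, true)) (end_slot (i, false))
  != slot_cyc (end_slot (i, true)) (end_slot (j, false)) (end_slot (i, false)).

Definition pat_parity (i : 'I_3) : int :=
  (-1) ^+ count (fun j => (val j != val i) && pat_crosses i j) ords3.

Definition pat_direction (i : 'I_3) : int :=
  if has (fun kA => has (fun kB => has (fun kC =>
       [&& val kA != val kB, val kA != val kC, val kB != val kC,
           (end_slot (i, true))./2 == val kA, (end_slot (i, false))./2 == val kB &
           slot_cyc (code (kA, false)) (code (kB, false)) (code (kC, false))])
     ords3) ords3) ords3
  then 1%R else (-1)%R.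

Definition pat_three_sign (i : 'I_3) : int :=
  (sign_of (nth false sgs i) * pat_parity i * pat_direction i)%R.

Definition pat_matched_same_signs : bool :=
  [&& pat_matched, pat_three_sign ix0 == pat_three_sign ix1
    & pat_three_sign ix1 == pat_three_sign ix2].
End Pattern.

Definition patterns_agree : bool :=
  all (fun l => all (fun sgs => let realisable := pat_realisable l sgs in
    all (fun ccw => realisable == pat_matched_same_signs l sgs ccw) [:: true; false])
  (triples [:: true; false])) (permutations (iota 0 6)).

Lemma patterns_agreeP : patterns_agree.
Proof. by vm_compute. Qed.

(** * From a Gauss diagram to its chord pattern *)

Section GaussTriple.
Variables (n : nat) (tl hd : 'I_n -> 'I_(n.*2)) (sg : 'I_n -> int)
  (t : 'I_3 -> 'I_n) (q : 'I_3 -> 'I_(n.*2)).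
Hypotheses (gauss : is_gauss tl hd sg) (arcs : triple_arcs tl hd t q).

Definition slot_pos (x : 'I_3 * bool) : nat := if x.2 then arc_snd q x.1 else arc_fst q x.1.
Definition end_pos (e : 'I_3 * bool) : nat := if e.2 then tl (t e.1) else hd (t e.1).

Lemma arc_positionsE : arc_positions q = map slot_pos ends3.
Proof. by rewrite /arc_positions enum_ord3. Qed.

Lemma slot_pos_inj : injective slot_pos.
Proof.
case: arcs => _ + _ x y; rewrite arc_positionsE => /uniq_map_inj; apply; exact: mem_ends3.
Qed.

Lemma end_pos_inj : injective end_pos.
Proof.
case: gauss => tl_inj hd_inj tl_hd _; case: arcs => t_inj _ _.
move=> [i []] [j []] /val_inj /= E.
- by move/tl_inj/t_inj: E => ->.
- by have := tl_hd (t i) (t j); rewrite E eqxx.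
- by have := tl_hd (t j) (t i); rewrite E eqxx.
- by move/hd_inj/t_inj: E => ->.
Qed.

Lemma slot_holds_end x : exists e, end_pos e = slot_pos x.
Proof.
case: arcs => _ _ /allP all_ends.
have /all_ends/existsP[i] : slot_pos x \in arc_positions q.
  by rewrite arc_positionsE map_f ?mem_ends3.
by case/orP => /eqP ->; [exists (i, true) | exists (i, false)].
Qed.

Lemma exists_slot_of : exists2 slot_of : 'I_3 * bool -> 'I_3 * bool,
  injective slot_of & forall e, slot_pos (slot_of e) = end_pos e.
Proof.
pose end_at x := odflt x [pick e | end_pos e == slot_pos x].
have end_atP x : end_pos (end_at x) = slot_pos x.
  rewrite /end_at; case: pickP => [e /eqP // | none].
  by case: (slot_holds_end x) => e /eqP; rewrite none.
have end_at_inj : injective end_at by move=> x y E; apply: slot_pos_inj; rewrite -!end_atP E.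
by exists (finv end_at) => [| e]; [exact: finv_inj | rewrite -end_atP f_finv].
Qed.

Let N := n.*2.
Let rot x := (slot_pos x + (N - slot_pos (ix0, false))) %% N.

Lemma slot_pos_lt x : slot_pos x < N.
Proof.
case: x => k []; rewrite /slot_pos /= ?ltn_ord // /arc_snd /succp ltn_pmod //.
exact: leq_ltn_trans (ltn_ord (q k)).
Qed.

Lemma rot_inj : injective rot.
Proof.
move=> x y /eqP; rewrite /rot eqn_modDr !modn_small ?slot_pos_lt // => /eqP.
exact: slot_pos_inj.
Qed.

Lemma rot00 : rot (ix0, false) = 0.
Proof. by rewrite /rot subnKC ?modnn // ltnW // slot_pos_lt. Qed.

(* No wrap-around: position 0 is taken by the first slot of arc 0. *)
Lemma rot_snd k : rot (k, true) = (rot (k, false)).+1.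
Proof.
have N_gt0 : 0 < N by apply: leq_ltn_trans (slot_pos_lt (ix0, false)).
have rot_snd' : rot (k, true) = (rot (k, false)).+1 %% N.
  by rewrite /rot /= /arc_snd /succp modnDml -[in RHS]addn1 modnDml addn1 -addSn.
suff lt_N : (rot (k, false)).+1 < N by rewrite rot_snd' modn_small.
rewrite ltn_neqAle ltn_pmod // andbT; apply/eqP => E.
have /(congr1 snd) // : (k, true) = (ix0, false).
by apply: rot_inj; rewrite rot00 rot_snd' E modnn.
Qed.

Definition ccw : bool :=
  cyc (slot_pos (ix0, false)) (slot_pos (ix1, false)) (slot_pos (ix2, false)).

Lemma cyc_rotE x y z : cyc (slot_pos x) (slot_pos y) (slot_pos z) = cyc (rot x) (rot y) (rot z).
Proof. by rewrite /rot cyc_rot ?slot_pos_lt ?leq_subr. Qed.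

Lemma rot_ltE x y : (rot x < rot y) = (slot_rank ccw (code x) < slot_rank ccw (code y)).
Proof.
(* The rotated slots are 0, 1, a, a + 1, b, b + 1 for a := rot (ix1, false)
   and b := rot (ix2, false); they are pairwise distinct and [ccw] is a < b. *)
have rot_neq x' y' : x' != y' -> rot x' != rot y' by move=> ?; rewrite (inj_eq rot_inj).
have := rot_neq (ix1, false) (ix0, false) isT; have := rot_neq (ix1, false) (ix0, true) isT.
have := rot_neq (ix2, false) (ix0, false) isT; have := rot_neq (ix2, false) (ix0, true) isT.
have := rot_neq (ix1, false) (ix2, false) isT; have := rot_neq (ix1, true) (ix2, false) isT.
have := rot_neq (ix2, true) (ix1, false) isT.
have ccwE : ccw = (rot (ix1, false) < rot (ix2, false)).
  rewrite /ccw cyc_rotE rot00 /cyc; have := rot_neq (ix1, false) (ix0, false) isT.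
  by rewrite rot00; lia.
rewrite !rot_snd rot00; case ccw_b : ccw; move: ccw_b; rewrite ccwE;
  case: x y => [k c] [k' c'];
  by case: (ord3P k); case: (ord3P k'); case: c; case: c';
     rewrite ?rot_snd ?rot00 /slot_rank /=; lia.
Qed.

Lemma cyc_slot_pos x y z :
  cyc (slot_pos x) (slot_pos y) (slot_pos z) = slot_cyc ccw (code x) (code y) (code z).
Proof. by rewrite cyc_rotE; apply: cyc_congr; apply: rot_ltE. Qed.

Lemma pos_onE P v sigma s u : pos_on q P v sigma s u = slot_pos (sigma s, ~~ first_on P v s u).
Proof. by rewrite /pos_on; case: first_on. Qed.

Lemma pos_on_relabel P v sigma pi s u : injective pi ->
  pos_on q (P \o pi) (v \o pi) (sigma \o pi) s u = pos_on q P v sigma (pi s) (pi u).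
Proof. by move=> pi_inj; rewrite /pos_on first_on_relabel. Qed.

Lemma three_movable_sorted : three_movable tl hd sg t q <->
  exists2 sigma : 'I_3 -> 'I_3, injective sigma &
    exists P v, lines_general P v /\ realises tl hd sg t q P v (@nat_of_ord 3) sigma.
Proof.
split=> [[sigma [sigma_inj [P [v [h [gen h_inj real]]]]]] | [sigma sigma_inj [P [v [gen real]]]]].
  have [pi pi_inj h_pi] := sort_heights h_inj.
  exists (sigma \o pi); first exact: inj_comp.
  exists (P \o pi), (v \o pi); split; first exact: lines_general_relabel.
  move=> s u su; have [|i [body sg_i]] := real (pi s) (pi u); first by rewrite (inj_eq pi_inj).
  exists i; rewrite /cr_sign (@pos_on_relabel P v sigma pi s u pi_inj).
  rewrite (@pos_on_relabel P v sigma pi u s pi_inj).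
  by rewrite /cr_sign !h_pi in body sg_i.
by exists sigma; split=> //; exists P, v, (@nat_of_ord 3); split=> //; exact: val_inj.
Qed.

Variable slot_of : 'I_3 * bool -> 'I_3 * bool.
Hypothesis slot_ofP : forall e, slot_pos (slot_of e) = end_pos e.

Let l := [seq code (slot_of e) | e <- ends3].
Let sgs := [seq sg (t i) == 1%R | i <- ords3].

Lemma end_slotE e : end_slot l e = code (slot_of e).
Proof.
by rewrite /end_slot (nth_map e) ?nth_ends3 //; case: e => i b; case: (ord3P i); case: b.
Qed.

Lemma slot_pos_end x e : (slot_pos x == end_pos e) = (code x == end_slot l e).
Proof. by rewrite end_slotE -slot_ofP (inj_eq slot_pos_inj) (inj_eq code_inj). Qed.

Lemma sign_ofE (i : 'I_3) : sign_of (nth false sgs i) = sg (t i).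
Proof. by rewrite nth_map_ords3; case: gauss => _ _ _ /(_ (t i)) [] ->. Qed.

Lemma is_head_slot x : is_head hd t (slot_pos x) = pat_is_head l (code x).
Proof.
by rewrite /is_head -has_ords3; apply: eq_in_has => i _; exact: (slot_pos_end x (i, false)).
Qed.

Lemma is_tail_slot x : is_tail tl t (slot_pos x) = pat_is_tail l (code x).
Proof.
by rewrite /is_tail -has_ords3; apply: eq_in_has => i _; exact: (slot_pos_end x (i, true)).
Qed.

Lemma owns_slot (i : 'I_3) x : owns tl hd t i (slot_pos x) = pat_owns l i (code x).
Proof. by rewrite /owns /pat_owns -(slot_pos_end x (i, true)) -(slot_pos_end x (i, false)). Qed.

Lemma arc_fstE k : arc_fst q k = slot_pos (k, false). Proof. by []. Qed.
Lemma arc_sndE k : arc_snd q k = slot_pos (k, true). Proof. by []. Qed.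

Lemma ex_owns_slot x y :
  [exists i, owns tl hd t i (slot_pos x) && owns tl hd t i (slot_pos y)]
  = has (fun i => pat_owns l i (code x) && pat_owns l i (code y)) ords3.
Proof. by rewrite has_ords3; apply: eq_existsb => i; rewrite !owns_slot. Qed.

Lemma matchedE : matched tl hd t q <-> pat_matched l.
Proof.
apply: (iff_trans (exists3P _)); rewrite /pat_matched.
under eq_has => kH do under eq_has => kT do under eq_has => kM do
  rewrite !arc_fstE !arc_sndE !is_head_slot !is_tail_slot ex_owns_slot -!val_eqE.
by [].
Qed.

Lemma cyc_end_pos e1 e2 e3 :
  cyc (end_pos e1) (end_pos e2) (end_pos e3)
  = slot_cyc ccw (end_slot l e1) (end_slot l e2) (end_slot l e3).
Proof. by rewrite -!slot_ofP cyc_slot_pos !end_slotE. Qed.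

Lemma crossesE i j : i != j -> crosses tl hd (t i) (t j) = pat_crosses l ccw i j.
Proof.
move=> ij; rewrite /crosses between_cyc; last first.
  rewrite -[[:: _; _; _; _]]/(map end_pos [:: (i, true); (i, false); (j, true); (j, false)]).
  by rewrite (map_inj_uniq end_pos_inj) /= !inE !xpair_eqE (negbTE ij) /= !andbF.
rewrite (cyc_end_pos (i, true) (j, true) (i, false)).
by rewrite (cyc_end_pos (i, true) (j, false) (i, false)).
Qed.

Lemma parityE i : parity tl hd t i = pat_parity l ccw i.
Proof.
rewrite /parity /pat_parity card_ords3; congr (_ ^+ _)%R; apply: eq_in_count => j _.
by rewrite val_eqE; case: eqVneq => // ji; rewrite crossesE // eq_sym.
Qed.

Lemma in_arc_end k e : in_arc q k (end_pos e) = ((end_slot l e)./2 == val k).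
Proof.
rewrite /in_arc arc_fstE arc_sndE -slot_ofP !(inj_eq slot_pos_inj) end_slotE half_code.
by case: (slot_of e) => k' [] /=; rewrite !xpair_eqE /= ?andbT ?andbF ?orbF val_eqE.
Qed.

Lemma directionE i : direction tl hd t q i = pat_direction l ccw i.
Proof.
rewrite /direction /pat_direction; congr (if _ then _ else _).
rewrite has_ords3; apply: eq_existsb => kA; rewrite has_ords3; apply: eq_existsb => kB.
rewrite has_ords3; apply: eq_existsb => kC; rewrite !val_eqE.
by rewrite (in_arc_end kA (i, true)) (in_arc_end kB (i, false)) !arc_fstE cyc_slot_pos.
Qed.

Lemma three_signE i : three_sign tl hd sg t q i = pat_three_sign l sgs ccw i.
Proof. by rewrite /three_sign /pat_three_sign sign_ofE parityE directionE. Qed.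

Lemma matched_same_signsE :
  matched tl hd t q /\ three_sign tl hd sg t q ix0 = three_sign tl hd sg t q ix1
                    /\ three_sign tl hd sg t q ix1 = three_sign tl hd sg t q ix2
  <-> pat_matched_same_signs l sgs ccw.
Proof.
rewrite /pat_matched_same_signs !three_signE.
by split=> [[/matchedE -> [-> ->]] | /and3P[/matchedE ? /eqP -> /eqP ->]]; rewrite ?eqxx.
Qed.

Lemma crossing_in_chords P v sigma s u : lines_general P v -> s != u ->
  ((code (sigma s, ~~ first_bit (first_bits P v) s u),
    code (sigma u, ~~ first_bit (first_bits P v) u s), det_bit (det_bits v) s u)
     \in pat_chords l sgs)
  = [exists i, [&& val (tl (t i)) == pos_on q P v sigma s u,
                   val (hd (t i)) == pos_on q P v sigma u s
                 & sg (t i) == sgn (det2 (v s) (v u))]].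
Proof.
move=> gen su; have us : u != s by rewrite eq_sym.
rewrite /pat_chords -has_pred1 has_map has_ords3; apply: eq_existsb => i /=.
rewrite !xpair_eqE -(first_onE gen su) -(first_onE gen us) !pos_onE -sign_ofE.
rewrite -[sgn _]/(sign_of (0 < det2 (v s) (v u))%R) (det2_gt0E gen su) (inj_eq sign_of_inj).
rewrite ![_ == slot_pos _]eq_sym (slot_pos_end _ (i, true)) (slot_pos_end _ (i, false)).
by rewrite -andbA ![end_slot _ _ == _]eq_sym.
Qed.

Lemma realises_chords P v sigma : lines_general P v ->
  realises tl hd sg t q P v (@nat_of_ord 3) sigma <->
  all [in pat_chords l sgs] (crossings sigma (first_bits P v) (det_bits v)).
Proof.
move=> gen; split=> [real | /allP chords_ok].
  apply/allP => _ /mapP[[s u] + ->]; rewrite over_pairsP /= => us.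
  have su : s != u by apply: contraTneq us => ->; rewrite ltnn.
  have [i [body sg_i]] := real s u su.
  rewrite (crossing_in_chords sigma gen su).
  apply/existsP; exists i; move: body sg_i; rewrite /cr_sign us.
  by move=> /andP[-> ->] ->; rewrite eqxx.
have chord_at (s u : 'I_3) : u < s -> exists i, [&& val (tl (t i)) == pos_on q P v sigma s u,
    val (hd (t i)) == pos_on q P v sigma u s & sg (t i) == sgn (det2 (v s) (v u))].
  move=> us; have su : s != u by apply: contraTneq us => ->; rewrite ltnn.
  apply/existsP; rewrite -(crossing_in_chords sigma gen su); apply: chords_ok.
  by apply/mapP; exists (s, u); rewrite ?over_pairsP.
move=> s u su; rewrite /cr_sign; case: (ltngtP u s) => [us | su' | /val_inj eq_us].
- by have [i /and3P[tl_i hd_i /eqP sg_i]] := chord_at s u us; exists i; rewrite tl_i hd_i sg_i.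
- by have [i /and3P[tl_i hd_i /eqP sg_i]] := chord_at u s su'; exists i; rewrite tl_i hd_i sg_i.
- by rewrite eq_us eqxx in su.
Qed.

Lemma three_movableE : three_movable tl hd sg t q <-> pat_realisable l sgs.
Proof.
rewrite three_movable_sorted /pat_realisable /configuration_crossings; split.
  move=> [sigma sigma_inj [P [v [gen real]]]]; apply/hasP.
  pose c := (map sigma ords3, (map (first_bits P v) ords3, map (det_bits v) ords3)).
  have c_in : c \in configurations.
    rewrite mem_filter (eq_triangle_signs (nth_map_ords3 false (first_bits P v))
      (nth_map_ords3 false (det_bits v))) triangle_signs_bits // andTb.
    apply: allpairs_f; last by apply: allpairs_f; apply: map_ords3_triples => s; apply: mem_bools.
    by rewrite mem_permutations perm_map_inj_full ?uniq_ords3 //; exact: mem_ords3.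
  exists (crossings (nth ix0 c.1) (nth false c.2.1) (nth false c.2.2)).
    by apply/mapP; exists c.
  rewrite (eq_crossings (nth_map_ords3 ix0 sigma) (nth_map_ords3 false (first_bits P v))
    (nth_map_ords3 false (det_bits v))).
  exact/realises_chords.
move=> /hasP[_ /mapP[[xs [fs ds]] + ->]]; rewrite mem_filter => /andP[tri].
move=> c_in ok; have xs_perm : xs \in permutations ords3.
  by case/allpairsP: c_in => -[? ?] [? _ [-> _]].
have [P [v [gen fb db]]] := exists_lines_with_bits tri.
have [xs_uniq xs_size] : uniq xs /\ size xs = 3.
  rewrite mem_permutations in xs_perm.
  by rewrite (perm_uniq xs_perm) (perm_size xs_perm) uniq_ords3.
exists (nth ix0 xs) => [s u /eqP | ]; first by rewrite nth_uniq ?xs_size // => /eqP /val_inj.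
exists P, v; split=> //; apply/(realises_chords _ gen).
by rewrite (eq_crossings (frefl _) fb db).
Qed.

Hypothesis slot_of_inj : injective slot_of.

Lemma realisable_matched_same_signs :
  pat_realisable l sgs = pat_matched_same_signs l sgs ccw.
Proof.
have l_perm : l \in permutations (iota 0 6).
  rewrite mem_permutations /l map_comp.
  apply: perm_trans (perm_map code (perm_map_inj_full uniq_ends3 mem_ends3 slot_of_inj)) _.
  exact: perm_refl.
have sgs_in : sgs \in triples [:: true; false] by apply: map_ords3_triples => i; apply: mem_bools.
have := allP patterns_agreeP l l_perm => /allP /(_ sgs sgs_in) /allP.
by move=> /(_ ccw (mem_bools _)) /eqP.
Qed.

End GaussTriple.

Theorem mainTheorem1 (n : nat) (tl hd : 'I_n -> 'I_(n.*2)) (sg : 'I_n -> int)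
    (t : 'I_3 -> 'I_n) (q : 'I_3 -> 'I_(n.*2)) :
  is_gauss tl hd sg ->
  triple_arcs tl hd t q ->
  (three_movable tl hd sg t q <->
   matched tl hd t q /\
   three_sign tl hd sg t q ix0 = three_sign tl hd sg t q ix1 /\
   three_sign tl hd sg t q ix1 = three_sign tl hd sg t q ix2).
Proof.
move=> gauss arcs; have [slot_of slot_of_inj slot_ofP] := exists_slot_of arcs.
apply: (iff_trans (three_movableE gauss arcs slot_ofP)).
rewrite (realisable_matched_same_signs sg t q slot_of_inj).
exact: iff_sym (matched_same_signsE gauss arcs slot_ofP).
Qed.
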